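(* Let $V:\mathcal{H}_L\otimes\mathcal{H}_J\to\mathcal{H}_p$ be the encoding isometry of a subsystem code on a physical system consisting of a collection of subsystems, and let $R$ be a correctable region. Then every dressed-CSP operator $A$ supported on $R$ implements a logical operation of the form $\mathrm{Id}_L\otimes A_J$ for some $A_J\in\mathcal{B}(\mathcal{H}_J)$.
   Context: $\Pi=VV^\dagger$. An operator $A$ on $\mathcal{H}_p$ is codespace-preserving (CSP) if $[A,\Pi]=0$; dressed-CSP if moreover $V^\dagger AV=A_L\otimes A_J$ for some $A_L\in\mathcal{B}(\mathcal{H}_L)$, $A_J\in\mathcal{B}(\mathcal{H}_J)$ (then $A$ implements $A_L\otimes A_J$); bare-CSP if moreover $A_J=\mathrm{Id}_J$. A region $R$ is a set of physical subsystems; $A$ is supported on $R$ if $A=A_R\otimes\mathrm{Id}_{R^c}$. $R$ is correctable if for every $A_L\in\mathcal{B}(\mathcal{H}_L)$ there is a bare-CSP operator supported on $R^c$ implementing $A_L\otimes\mathrm{Id}_J$. *)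

(* Operators between
   finite-dimensional spaces with chosen bases I, J are represented by
   their matrix coefficients [mat I J := I -> J -> C] (row index I). *)
From HB Require Import structures.
From mathcomp Require Import all_boot all_order all_algebra.
Set Implicit Arguments. Unset Strict Implicit. Unset Printing Implicit Defensive.
Import Order.TTheory GRing.Theory Num.Theory.
Local Open Scope ring_scope.

Section Ops.
Variable C : numClosedFieldType.

Definition mat (I J : finType) := I -> J -> C.

Definition mmul (I J K : finType) (A : mat I J) (B : mat J K) : mat I K :=
  fun i k => \sum_(j : J) A i j * B j k.

Definition madj (I J : finType) (A : mat I J) : mat J I :=
  fun j i => (A i j)^*.

Definition mid (I : finType) : mat I I := fun i j => (i == j)%:R.

Definition meq (I J : finType) (A B : mat I J) : Prop :=
  forall i j, A i j = B i j.

(* tensor product: basis of H_L (x) H_J is the product of bases *)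
Definition mtens (I I' J J' : finType) (A : mat I I') (B : mat J J')
  : mat (I * J)%type (I' * J')%type :=
  fun p q => A p.1 q.1 * B p.2 q.2.

End Ops.
Arguments mid C I _ _ : clear implicits.

Section Code.
Variable C : numClosedFieldType.
(* physical system: n subsystems, subsystem i has dimension d i;
   basis of H_p = product basis, indexed by configurations *)
Variables (n : nat) (d : 'I_n -> nat).
Definition phys : finType := {dffun forall i : 'I_n, 'I_(d i)}.
Variables (dL dJ : nat).
Definition logi : finType := ('I_dL * 'I_dJ)%type.

Definition is_isometry (V : mat C phys logi) : Prop :=
  meq (mmul (madj V) V) (mid C logi).

Definition proj (V : mat C phys logi) : mat C phys phys := mmul V (madj V).

Definition CSP (V : mat C phys logi) (A : mat C phys phys) : Prop :=
  meq (mmul A (proj V)) (mmul (proj V) A).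

Definition implements (V : mat C phys logi) (A : mat C phys phys)
  (AL : mat C 'I_dL 'I_dL) (AJ : mat C 'I_dJ 'I_dJ) : Prop :=
  meq (mmul (madj V) (mmul A V)) (mtens AL AJ).

Definition dressed_CSP (V : mat C phys logi) (A : mat C phys phys) : Prop :=
  CSP V A /\ exists AL AJ, implements V A AL AJ.

Definition bare_CSP (V : mat C phys logi) (A : mat C phys phys) : Prop :=
  CSP V A /\ exists AL, implements V A AL (mid C 'I_dJ).

(* A = A_R (x) Id_{R^c}: the matrix coefficient <x|A|y> is
   <x_R|A_R|y_R> * delta(x_{R^c}, y_{R^c}) *)
Definition supported_on (R : {set 'I_n}) (A : mat C phys phys) : Prop :=
  exists AR : mat C phys phys,
    (forall x x' y y' : phys,
        (forall i, i \in R -> x i = x' i /\ y i = y' i) ->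
        AR x y = AR x' y') /\
    (forall x y : phys,
        A x y = if [forall i, (i \notin R) ==> (x i == y i)]
                then AR x y else 0).

Definition correctable (V : mat C phys logi) (R : {set 'I_n}) : Prop :=
  forall AL : mat C 'I_dL 'I_dL,
    exists B : mat C phys phys,
      bare_CSP V B /\ supported_on (~: R) B /\
      implements V B AL (mid C 'I_dJ).

End Code.

(* Operators supported on R and on its complement commute, and conjugating by
   the isometry V is multiplicative on codespace-preserving operators.  Hence,
   if A implements A_L (x) A_J and B, supported on ~: R, implements B_L (x) Id,
   then A_L B_L (x) A_J = B_L A_L (x) A_J.  Correctability supplies such a B
   for every B_L; testing against the matrix units B_L = e_(k, i0) forces
   A_L (x) A_J = Id (x) (A_L i0 i0 A_J). *)
From mathcomp Require Import all_boot all_order all_algebra.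
From Stdlib Require Import FunctionalExtensionality.
Set Implicit Arguments. Unset Strict Implicit. Unset Printing Implicit Defensive.
Import Order.TTheory GRing.Theory Num.Theory.
Local Open Scope ring_scope.

Section MatrixAlgebra.
Variable C : numClosedFieldType.

Lemma meq_eq (I J : finType) (A B : mat C I J) : meq A B -> A = B.
Proof. by move=> eqAB; do 2 apply: functional_extensionality => ?; apply: eqAB. Qed.

Lemma mmulA (I J K L : finType) (A : mat C I J) (B : mat C J K) (D : mat C K L) :
  mmul (mmul A B) D = mmul A (mmul B D).
Proof.
apply: meq_eq => i l; rewrite /mmul.
under eq_bigr do rewrite big_distrl.
rewrite exchange_big; apply: eq_bigr => j _; rewrite big_distrr.
by apply: eq_bigr => k _ /=; rewrite mulrA.
Qed.

Lemma mmul_mid (I J : finType) (A : mat C I J) : mmul A (mid C J) = A.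
Proof.
apply: meq_eq => i j; rewrite /mmul /mid (bigD1 j) //= eqxx mulr1 big1 ?addr0 //.
by move=> k /negbTE ->; rewrite mulr0.
Qed.

Lemma mid_mmul (I J : finType) (A : mat C I J) : mmul (mid C I) A = A.
Proof.
apply: meq_eq => i j; rewrite /mmul /mid (bigD1 i) //= eqxx mul1r big1 ?addr0 //.
by move=> k; rewrite eq_sym => /negbTE ->; rewrite mul0r.
Qed.

Lemma mmul_mtens (I I' I'' J J' J'' : finType) (A1 : mat C I I') (A2 : mat C I' I'')
    (B1 : mat C J J') (B2 : mat C J' J'') :
  mmul (mtens A1 B1) (mtens A2 B2) = mtens (mmul A1 A2) (mmul B1 B2).
Proof.
apply: meq_eq => p q; rewrite /mmul /mtens big_distrl /=.
under [RHS]eq_bigr do rewrite big_distrr.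
by rewrite pair_bigA; apply: eq_bigr => -[m r] _ /=; rewrite mulrACA.
Qed.

Definition munit (I J : finType) (k : I) (l : J) : mat C I J :=
  fun i j => ((i == k) && (j == l))%:R.

Lemma mmul_munit (I J K : finType) (A : mat C I J) (k : J) (l : K) i j :
  mmul A (munit k l) i j = A i k * (j == l)%:R.
Proof.
rewrite /mmul /munit (bigD1 k) //= eqxx big1 ?addr0 // => m /negbTE ->.
by rewrite mulr0.
Qed.

Lemma munit_mmul (I J K : finType) (k : I) (l : J) (A : mat C J K) i j :
  mmul (munit k l) A i j = (i == k)%:R * A l j.
Proof.
rewrite /mmul /munit (bigD1 l) //= eqxx andbT big1 ?addr0 // => m /negbTE ->.
by rewrite andbF mul0r.
Qed.

Lemma mtens_commutant (I J : finType) (AL : mat C I I) (AJ : mat C J J) :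
  (forall BL : mat C I I,
     mmul (mtens AL AJ) (mtens BL (mid C J)) = mmul (mtens BL (mid C J)) (mtens AL AJ)) ->
  exists AJ' : mat C J J, mtens AL AJ = mtens (mid C I) AJ'.
Proof.
move=> commAL; have [i0 _ | I0] := pickP (fun _ : I => true); last first.
  by exists AJ; apply: meq_eq => -[i j]; have := I0 i.
exists (fun j l => AL i0 i0 * AJ j l); apply: meq_eq => -[i j] [k l].
have := congr1 (fun M => M (i, j) (i0, l)) (commAL (munit k i0)).
rewrite !mmul_mtens mmul_mid mid_mmul /mtens /= mmul_munit munit_mmul eqxx mulr1.
by rewrite /mid mulrA => ->.
Qed.

End MatrixAlgebra.

Section Code.
Variable C : numClosedFieldType.
Variables (n : nat) (d : 'I_n -> nat) (dL dJ : nat).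
Implicit Types (R : {set 'I_n}) (x y z : phys d) (A B X Y : mat C (phys d) (phys d)).

Section Isometry.
Variable V : mat C (phys d) (logi dL dJ).
Hypothesis isoV : is_isometry V.

Lemma CSP_mmul_V Y : CSP V Y -> mmul Y V = mmul V (mmul (madj V) (mmul Y V)).
Proof.
move=> /meq_eq commY.
rewrite -{1}(mmul_mid V) -(meq_eq isoV) -!mmulA.
by rewrite [mmul (mmul Y V) _]mmulA -/(proj V) commY.
Qed.

Lemma compress_mmul X Y : CSP V Y ->
  mmul (madj V) (mmul (mmul X Y) V)
  = mmul (mmul (madj V) (mmul X V)) (mmul (madj V) (mmul Y V)).
Proof. by move=> cspY; rewrite [mmul (mmul X Y) V]mmulA {1}(CSP_mmul_V cspY) !mmulA. Qed.

End Isometry.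

Definition agree_off R x y := [forall i, (i \notin R) ==> (x i == y i)].

Definition mix R x z : phys d := [ffun i => if i \in R then z i else x i].

Lemma mixE R x z i : mix R x z i = if i \in R then z i else x i.
Proof. exact: ffunE. Qed.

Lemma mixC R x z : mix (~: R) x z = mix R z x.
Proof. by apply/ffunP => i; rewrite !mixE in_setC; case: (i \in R). Qed.

Lemma agree_off_mixl R x z : agree_off R x (mix R x z).
Proof. by apply/forallP => i; apply/implyP => /negbTE iR; rewrite mixE iR. Qed.

Lemma agree_off_mixr R x z : agree_off (~: R) (mix R x z) z.
Proof. by apply/forallP => i; rewrite in_setC negbK; apply/implyP => iR; rewrite mixE iR. Qed.

Lemma agree_off_mix R x y z :
  agree_off R x y -> agree_off (~: R) y z -> y = mix R x z.
Proof.
move=> /forallP xy /forallP yz; apply/ffunP => i; rewrite mixE.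
case: ifP => iR; first by have := yz i; rewrite in_setC iR => /eqP.
by have := xy i; rewrite iR => /eqP.
Qed.

Lemma supported_on0 R A x y : supported_on R A -> ~~ agree_off R x y -> A x y = 0.
Proof. by move=> [AR [_ ->]] /negbTE; rewrite /agree_off => ->. Qed.

Lemma supported_on_local R A x y x' y' : supported_on R A ->
  agree_off R x y -> agree_off R x' y' ->
  (forall i, i \in R -> x i = x' i /\ y i = y' i) -> A x y = A x' y'.
Proof. by move=> [AR [localAR eqA]]; rewrite !eqA /agree_off => -> -> /localAR. Qed.

Lemma mmul_supported R A B x z : supported_on R A -> supported_on (~: R) B ->
  mmul A B x z = A x (mix R x z) * B (mix R x z) z.
Proof.
move=> suppA suppB; rewrite /mmul (bigD1 (mix R x z)) //= big1 ?addr0 // => y.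
apply: contraNeq; rewrite mulf_eq0 negb_or => /andP[Axy Byz].
apply/eqP/agree_off_mix.
- by apply: contraNT Axy => /(supported_on0 suppA) ->.
- by apply: contraNT Byz => /(supported_on0 suppB) ->.
Qed.

Lemma supported_mmulC R A B : supported_on R A -> supported_on (~: R) B ->
  mmul A B = mmul B A.
Proof.
move=> suppA suppB; apply: meq_eq => x z.
have suppA' : supported_on (~: ~: R) A by rewrite setCK.
rewrite (mmul_supported x z suppA suppB) (mmul_supported x z suppB suppA') mixC mulrC.
congr (_ * _).
- apply: (supported_on_local suppB); first exact: agree_off_mixr.
    by rewrite -mixC agree_off_mixl.
  by move=> i; rewrite in_setC => /negbTE iR; rewrite !mixE iR.
- apply: (supported_on_local suppA); first exact: agree_off_mixl.
    by have := agree_off_mixr (~: R) x z; rewrite setCK mixC.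
  by move=> i iR; rewrite !mixE iR.
Qed.

End Code.

Theorem lemma2 (C : numClosedFieldType) (n : nat) (d : 'I_n -> nat)
  (dL dJ : nat) (V : mat C (phys d) (logi dL dJ))
  (HV : is_isometry V) (R : {set 'I_n}) (HR : correctable V R)
  (A : mat C (phys d) (phys d))
  (HA : dressed_CSP V A) (HAR : supported_on R A) :
  exists AJ : mat C 'I_dJ 'I_dJ, implements V A (mid C 'I_dL) AJ.
Proof.
have [cspA [AL [AJ /meq_eq implA]]] := HA.
suff [AJ' eqA] : exists AJ', mtens AL AJ = mtens (mid C 'I_dL) AJ'.
  by exists AJ'; rewrite /implements implA eqA.
apply: mtens_commutant => BL.
have [B [[cspB _] [suppB /meq_eq implB]]] := HR BL.
by rewrite -implA -implB -!compress_mmul // (supported_mmulC HAR suppB).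
Qed.
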